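(* Let $a>0$, $p>1$, and let $\phi\in C^1((0,a])\cap C^0([0,a])$ satisfy $\phi(0)=0$, $\phi(t)>0$ for $t\in(0,a]$, and $c_1t^{p-1+\delta}\le\phi(t)\le c_2t^{p-1+\delta}$ for all $t\in(0,a]$, for some constants $c_1,c_2,\delta>0$. Suppose moreover that $\phi$ is twice differentiable in $(0,a)$ and $(\log\phi)''(t)=(\phi'/\phi)'(t)<0$ for all $t\in(0,a)$. Let $\eta_a(t)=\phi(t)^{-\frac1{p-1}}\big/\int_t^a\phi(\sigma)^{-\frac1{p-1}}\,d\sigma$ for $t\in(0,a)$. Then there exists a unique $T\in(0,a)$ such that $\eta_a'(t)<0$ for $t\in(0,T)$ and $\eta_a'(t)>0$ for $t\in(T,a)$. *)

From Stdlib Require Import Reals Lra.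
From Coquelicot Require Import Coquelicot.
Open Scope R_scope.

Definition continuous_within (D : R -> Prop) (f : R -> R) (x : R) : Prop :=
  forall eps : R, 0 < eps -> exists delta : R, 0 < delta /\
    forall y : R, D y -> Rabs (y - x) < delta -> Rabs (f y - f x) < eps.

Definition is_derive_within (D : R -> Prop) (f : R -> R) (x l : R) : Prop :=
  forall eps : R, 0 < eps -> exists delta : R, 0 < delta /\
    forall y : R, D y -> Rabs (y - x) < delta ->
      Rabs (f y - f x - l * (y - x)) <= eps * Rabs (y - x).

Definition C0_closed (a : R) (phi : R -> R) : Prop :=
  forall t, 0 <= t <= a -> continuous_within (fun s => 0 <= s <= a) phi t.

Definition C1_half_open (a : R) (phi : R -> R) : Prop :=
  exists dphi : R -> R,
    (forall t, 0 < t <= a -> is_derive_within (fun s => 0 < s <= a) phi t (dphi t)) /\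
    (forall t, 0 < t <= a -> continuous_within (fun s => 0 < s <= a) dphi t).

Definition eta_a (a p : R) (phi : R -> R) (t : R) : R :=
  Rpower (phi t) (- / (p - 1)) /
  RInt (fun s => Rpower (phi s) (- / (p - 1))) t a.

(* Write psi = phi^(-1/(p-1)), I t = int_t^a psi and k = psi'/psi, so that
   eta_a = psi / I.  Then (log eta_a)' = k + psi / I = g / I with
   g = psi + k I, and g' = k' I > 0 because psi is strictly log-convex
   (log psi = -(log phi)/(p-1)).  Hence eta_a' changes sign exactly once, where
   the increasing function g does, provided g takes both signs.
   If g >= 0 on (0,a), eta_a is nondecreasing, so psi <= K I near 0 with
   K = eta_a(a/2); then I' = -psi >= -K I keeps I, hence psi, bounded near 0,
   whereas psi t -> +oo because phi 0 = 0.
   If g <= 0 on (0,a), eta_a is nonincreasing, so psi <= K I -> 0 near a,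
   whereas psi is bounded below because phi is bounded above. *)

From Stdlib Require Import Reals Lra Ranalysis5 Classical.
From Coquelicot Require Import Coquelicot.
Open Scope R_scope.

Lemma le_right_of_derive_ge0 (f df : R -> R) (l r : R) :
  (forall x, l < x <= r -> is_derive f x (df x)) ->
  (forall x, l < x <= r -> 0 <= df x) ->
  forall x, l < x <= r -> f x <= f r.
Proof.
  intros Hd Hpos x Hx.
  destruct (Req_dec x r) as [->|Hne]; [lra|].
  pose proof (MVT_gen f x r df) as Hmvt; cbv zeta in Hmvt.
  rewrite Rmin_left, Rmax_right in Hmvt by lra.
  destruct Hmvt as [c [Hc Heq]].
  - intros z Hz; apply Hd; lra.
  - intros z Hz. apply continuity_pt_filterlim.
    apply (@ex_derive_continuous R_AbsRing R_NormedModule).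
    exists (df z). apply Hd. lra.
  - assert (0 <= df c) by (apply Hpos; lra). nra.
Qed.

(* Backward Gronwall inequality: s |-> f s * exp (K s) is nondecreasing. *)
Lemma le_exp_of_derive_ge (f df : R -> R) (K l r : R) :
  (forall x, l < x <= r -> is_derive f x (df x)) ->
  (forall x, l < x <= r -> - K * f x <= df x) ->
  forall x, l < x <= r -> f x <= f r * exp (K * (r - x)).
Proof.
  intros Hd Hge x Hx.
  assert (Hmono : f x * exp (K * x) <= f r * exp (K * r)).
  { apply (le_right_of_derive_ge0 (fun s => f s * exp (K * s))
             (fun s => (df s + K * f s) * exp (K * s)) l r); [| |exact Hx].
    - intros s Hs.
      assert (Hexp : is_derive (fun s => exp (K * s)) s (K * exp (K * s)))
        by (auto_derive; [exact I | ring]).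
      pose proof (is_derive_mult f (fun s => exp (K * s)) s _ _ (Hd s Hs) Hexp
                    Rmult_comm) as Hm.
      simpl in Hm; unfold plus, mult in Hm; simpl in Hm.
      replace ((df s + K * f s) * exp (K * s))
        with (df s * exp (K * s) + f s * (K * exp (K * s))) by ring.
      exact Hm.
    - intros s Hs. pose proof (exp_pos (K * s)). pose proof (Hge s Hs). nra. }
  replace (K * r) with (K * (r - x) + K * x) in Hmono by ring.
  rewrite exp_plus in Hmono.
  pose proof (exp_pos (K * x)). nra.
Qed.

Lemma is_derive_RInt_lower (f : R -> R) (l a t : R) :
  (forall s, l < s -> continuous f s) -> l < a -> l < t ->
  is_derive (fun u => RInt f u a) t (- f t).
Proof.
  intros Hcont Ha Ht.
  apply (is_derive_RInt' f (fun u => RInt f u a) t a); [|exact (Hcont t Ht)].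
  apply (locally_interval _ t l p_infty); [exact Ht | exact I |].
  intros u Hu _.
  apply (@RInt_correct R_CompleteNormedModule), (@ex_RInt_continuous R_CompleteNormedModule).
  intros z [Hz _]. apply Hcont.
  apply Rlt_le_trans with (Rmin u a); [apply Rmin_glb_lt|]; assumption.
Qed.

Lemma continuous_Rpower_l (e x : R) : 0 < x -> continuous (fun y => Rpower y e) x.
Proof.
  intros Hx. apply (@ex_derive_continuous R_AbsRing R_NormedModule).
  unfold Rpower. auto_derive. exact Hx.
Qed.

Lemma is_derive_Rpower_fun (f : R -> R) (e x : R) :
  ex_derive f x -> 0 < f x ->
  is_derive (fun s => Rpower (f s) e) x (e * (Derive f x / f x) * Rpower (f x) e).
Proof.
  intros Hf Hpos. unfold Rpower. auto_derive.
  - auto.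
  - change (Derive (fun s => f s) x) with (Derive f x). unfold Rdiv. ring.
Qed.

Lemma Rpower_le_contravar (x y e : R) : 0 < x <= y -> e <= 0 -> Rpower y e <= Rpower x e.
Proof.
  intros Hxy He.
  replace e with (- (- e)) by ring. rewrite (Rpower_Ropp y (- e)), (Rpower_Ropp x (- e)).
  apply Rinv_le_contravar; [apply exp_pos | apply Rle_Rpower_l; lra].
Qed.

Lemma Rpower_unbounded_at_0 (e : R) : e < 0 ->
  forall M, exists r, 0 < r /\ forall x, 0 < x < r -> M < Rpower x e.
Proof.
  intros He M.
  exists (exp (ln (Rabs M + 1) / e)). split; [apply exp_pos|]. intros x Hx.
  assert (Hln : ln x < ln (Rabs M + 1) / e).
  { rewrite <- (ln_exp (ln (Rabs M + 1) / e)). apply ln_increasing; lra. }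
  assert (Hmul : ln (Rabs M + 1) < e * ln x).
  { replace (ln (Rabs M + 1)) with (e * (ln (Rabs M + 1) / e)) by (field; lra).
    apply Rmult_lt_gt_compat_neg_l; assumption. }
  assert (HM : M < Rabs M + 1) by (pose proof (Rle_abs M); lra).
  rewrite <- (exp_ln (Rabs M + 1)) in HM by (pose proof (Rabs_pos M); lra).
  unfold Rpower. pose proof (exp_increasing _ _ Hmul). lra.
Qed.

(* Extending psi past a by its value at a makes t |-> int_t^a psi
   differentiable on the whole of (0, +oo), including at t = a. *)
Definition clamped_power (a e : R) (phi : R -> R) (s : R) : R :=
  Rpower (phi (Rmin s a)) e.

Section ClampedPower.

Variables (a e : R) (phi : R -> R).
Hypothesis a_pos : 0 < a.
Hypothesis phi_C0 : C0_closed a phi.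
Hypothesis phi_pos : forall t, 0 < t <= a -> 0 < phi t.

Lemma clamped_power_pos (s : R) : 0 < clamped_power a e phi s.
Proof. apply exp_pos. Qed.

Lemma continuous_clamp (s : R) : 0 < s -> continuous (fun y => phi (Rmin y a)) s.
Proof.
  intros Hs. apply filterlim_locally. intros eps.
  assert (Hm : 0 <= Rmin s a <= a)
    by (split; [apply Rmin_glb|apply Rmin_r]; lra).
  destruct (phi_C0 (Rmin s a) Hm eps (cond_pos eps)) as [d [Hd Hclose]].
  assert (Hds : 0 < Rmin d s) by (apply Rmin_glb_lt; lra).
  exists (mkposreal _ Hds). intros y Hy.
  change (Rabs (y - s) < Rmin d s) in Hy.
  change (Rabs (phi (Rmin y a) - phi (Rmin s a)) < eps).
  pose proof (Rmin_l d s). pose proof (Rmin_r d s).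
  apply Hclose.
  - assert (0 < y) by (unfold Rabs in Hy; destruct Rcase_abs; lra).
    split; [apply Rmin_glb|apply Rmin_r]; lra.
  - unfold Rmin, Rabs in *.
    repeat (destruct Rle_dec || destruct Rcase_abs); lra.
Qed.

Lemma clamped_power_continuous (s : R) : 0 < s -> continuous (clamped_power a e phi) s.
Proof.
  intros Hs.
  apply (continuous_comp (fun y => phi (Rmin y a)) (fun z => Rpower z e)).
  - exact (continuous_clamp s Hs).
  - apply continuous_Rpower_l, phi_pos.
    split; [apply Rmin_glb_lt | apply Rmin_r]; lra.
Qed.

Lemma clamped_power_derive (t : R) : 0 < t < a -> ex_derive phi t ->
  is_derive (clamped_power a e phi) t
    (e * (Derive phi t / phi t) * clamped_power a e phi t).
Proof.
  intros Ht Hd. unfold clamped_power. rewrite Rmin_left by lra.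
  apply (is_derive_ext_loc (fun s => Rpower (phi s) e)).
  - apply (locally_interval _ t m_infty a); [exact I | exact (proj2 Ht) |].
    intros y _ Hy. simpl in Hy. rewrite Rmin_left by lra. reflexivity.
  - apply is_derive_Rpower_fun; [exact Hd | apply phi_pos; lra].
Qed.

Lemma clamped_power_unbounded_at_0 : e < 0 -> phi 0 = 0 ->
  forall M eps, 0 < eps -> exists t, 0 < t < eps /\ M < clamped_power a e phi t.
Proof.
  intros He Hphi0 M eps Heps.
  destruct (Rpower_unbounded_at_0 e He M) as [r [Hr Hbig]].
  destruct (phi_C0 0 (conj (Rle_refl 0) (Rlt_le _ _ a_pos)) r Hr) as [d [Hd Hclose]].
  set (t := Rmin (Rmin d eps) a / 2).
  pose proof (Rmin_l (Rmin d eps) a). pose proof (Rmin_r (Rmin d eps) a).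
  pose proof (Rmin_l d eps). pose proof (Rmin_r d eps).
  assert (0 < Rmin (Rmin d eps) a) by (repeat apply Rmin_glb_lt; lra).
  assert (Ht : 0 < t) by (unfold t; lra).
  assert (Hta : t < a) by (unfold t; lra).
  exists t. split; [unfold t in *; lra|].
  unfold clamped_power. rewrite Rmin_left by lra. apply Hbig.
  assert (Hpt : 0 < phi t) by (apply phi_pos; lra).
  specialize (Hclose t ltac:(lra) ltac:(rewrite Rminus_0_r, Rabs_right; unfold t in *; lra)).
  rewrite Hphi0, Rminus_0_r, Rabs_right in Hclose by lra. lra.
Qed.

Lemma clamped_power_ge (M : R) : e <= 0 -> (forall t, 0 < t <= a -> phi t <= M) ->
  forall t, 0 < t < a -> Rpower M e <= clamped_power a e phi t.
Proof.
  intros He Hle t Ht. unfold clamped_power. rewrite Rmin_left by lra.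
  apply Rpower_le_contravar; [split; [apply phi_pos|apply Hle]; lra | exact He].
Qed.

End ClampedPower.

Definition sign_change (F : R -> R) (l r T : R) : Prop :=
  l < T < r /\ (forall t, l < t < T -> F t < 0) /\ (forall t, T < t < r -> 0 < F t).

Lemma sign_change_unique (F : R -> R) (l r T T' : R) :
  sign_change F l r T -> sign_change F l r T' -> T = T'.
Proof.
  intros [HT [Hneg Hpos]] [HT' [Hneg' Hpos']].
  destruct (Rtotal_order T T') as [Hlt|[Heq|Hgt]]; [|exact Heq|]; exfalso.
  - pose proof (Hpos ((T + T') / 2) ltac:(lra)).
    pose proof (Hneg' ((T + T') / 2) ltac:(lra)). lra.
  - pose proof (Hneg ((T + T') / 2) ltac:(lra)).
    pose proof (Hpos' ((T + T') / 2) ltac:(lra)). lra.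
Qed.

Lemma sign_change_mul (F G w : R -> R) (l r T : R) :
  (forall t, l < t < r -> F t = w t * G t) -> (forall t, l < t < r -> 0 < w t) ->
  sign_change G l r T -> sign_change F l r T.
Proof.
  intros Hmul Hw [HT [Hneg Hpos]].
  split; [exact HT | split]; intros t Ht; rewrite Hmul by lra;
    pose proof (Hw t ltac:(lra)).
  - pose proof (Hneg t Ht). nra.
  - pose proof (Hpos t Ht). nra.
Qed.

Lemma sign_change_of_increasing (g : R -> R) (l r t1 t2 : R) :
  (forall x y, l < x -> x < y -> y < r -> g x < g y) ->
  (forall t, l < t < r -> continuous g t) ->
  l < t1 < r -> l < t2 < r -> g t1 < 0 -> 0 < g t2 ->
  exists T, sign_change g l r T.
Proof.
  intros Hincr Hcont Ht1 Ht2 Hg1 Hg2.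
  assert (Ht12 : t1 < t2).
  { destruct (Rtotal_order t1 t2) as [Hlt|[Heq|Hgt]]; [exact Hlt| subst; lra |].
    pose proof (Hincr t2 t1 ltac:(lra) Hgt ltac:(lra)). lra. }
  destruct (IVT_interv g t1 t2) as [T [HT HgT]]; try assumption.
  { intros z Hz. apply continuity_pt_filterlim, Hcont. lra. }
  exists T. split; [lra | split]; intros t Ht; rewrite <- HgT; apply Hincr; lra.
Qed.

Section LogConvexQuotient.

Variables (a : R) (psi k dk : R -> R).
Hypothesis a_pos : 0 < a.
Hypothesis psi_pos : forall t, 0 < t -> 0 < psi t.
Hypothesis psi_cont : forall t, 0 < t -> continuous psi t.
Hypothesis psi_der : forall t, 0 < t < a -> is_derive psi t (k t * psi t).
Hypothesis k_der : forall t, 0 < t < a -> is_derive k t (dk t).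
Hypothesis dk_pos : forall t, 0 < t < a -> 0 < dk t.

Definition tail_integral (t : R) : R := RInt psi t a.

Definition tail_quotient (t : R) : R := psi t / tail_integral t.

(* (log tail_quotient)' = slope_factor / tail_integral. *)
Definition slope_factor (t : R) : R := psi t + k t * tail_integral t.

Lemma tail_integral_derive (t : R) : 0 < t -> is_derive tail_integral t (- psi t).
Proof. intros Ht. exact (is_derive_RInt_lower psi 0 a t psi_cont a_pos Ht). Qed.

Lemma tail_integral_at_end : tail_integral a = 0.
Proof. exact (RInt_point a psi). Qed.

Lemma tail_integral_pos (t : R) : 0 < t < a -> 0 < tail_integral t.
Proof.
  intros Ht.
  assert (Hdecr : - tail_integral t < - tail_integral a).
  { apply (incr_function_le (fun u => - tail_integral u) t a psi);
      simpl; try lra.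
    - intros x Hx1 Hx2. rewrite <- (Ropp_involutive (psi x)).
      apply (is_derive_opp tail_integral x (- psi x)), tail_integral_derive. lra.
    - intros x Hx1 _. apply psi_pos. lra. }
  rewrite tail_integral_at_end in Hdecr. lra.
Qed.

Lemma tail_weight_pos (t : R) : 0 < t < a -> 0 < psi t / tail_integral t ^ 2.
Proof.
  intros Ht. apply Rdiv_lt_0_compat; [apply psi_pos; lra|].
  apply pow_lt, tail_integral_pos, Ht.
Qed.

Lemma tail_quotient_derive (t : R) : 0 < t < a ->
  is_derive tail_quotient t (psi t / tail_integral t ^ 2 * slope_factor t).
Proof.
  intros Ht.
  assert (HI : tail_integral t <> 0) by (apply Rgt_not_eq, tail_integral_pos, Ht).
  pose proof (is_derive_div psi tail_integral t _ _ (psi_der t Ht)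
                (tail_integral_derive t (proj1 Ht)) HI) as Hdiv.
  unfold slope_factor. replace (psi t / tail_integral t ^ 2 * _) with
    ((k t * psi t * tail_integral t - psi t * - psi t) / tail_integral t ^ 2)
    by (field; exact HI).
  exact Hdiv.
Qed.

Lemma slope_factor_derive (t : R) : 0 < t < a ->
  is_derive slope_factor t (dk t * tail_integral t).
Proof.
  intros Ht.
  pose proof (is_derive_mult k tail_integral t _ _ (k_der t Ht)
                (tail_integral_derive t (proj1 Ht)) Rmult_comm) as Hprod.
  pose proof (is_derive_plus psi (fun s => k s * tail_integral s) t _ _
                (psi_der t Ht) Hprod) as Hsum.
  simpl in Hsum; unfold plus, mult in Hsum; simpl in Hsum.
  replace (dk t * tail_integral t) with
    (k t * psi t + (dk t * tail_integral t + k t * - psi t)) by ring.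
  exact Hsum.
Qed.

Lemma slope_factor_increasing (x y : R) : 0 < x -> x < y -> y < a ->
  slope_factor x < slope_factor y.
Proof.
  apply (incr_function slope_factor 0 a (fun t => dk t * tail_integral t)).
  - intros t Ht1 Ht2. apply slope_factor_derive. simpl in *; lra.
  - intros t Ht1 Ht2. simpl in *.
    apply Rmult_lt_0_compat; [apply dk_pos | apply tail_integral_pos]; lra.
Qed.

Lemma tail_quotient_le_of_slope_ge0 (x y : R) : 0 < x <= y -> y < a ->
  (forall t, 0 < t <= y -> 0 <= slope_factor t) -> tail_quotient x <= tail_quotient y.
Proof.
  intros Hx Hy Hge.
  apply (le_right_of_derive_ge0 tail_quotient
           (fun s => psi s / tail_integral s ^ 2 * slope_factor s) 0 y); [| |exact Hx].
  - intros t Ht. apply tail_quotient_derive. lra.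
  - intros t Ht. apply Rmult_le_pos; [|apply Hge, Ht].
    apply Rlt_le, tail_weight_pos. lra.
Qed.

Lemma tail_quotient_ge_of_slope_le0 (x y : R) : 0 < x <= y -> y < a ->
  (forall t, 0 < t <= y -> slope_factor t <= 0) -> tail_quotient y <= tail_quotient x.
Proof.
  intros Hx Hy Hle.
  apply Ropp_le_cancel.
  apply (le_right_of_derive_ge0 (fun s => - tail_quotient s)
           (fun s => - (psi s / tail_integral s ^ 2 * slope_factor s)) 0 y); [| |lra].
  - intros t Ht. apply (is_derive_opp tail_quotient), tail_quotient_derive. lra.
  - intros t Ht. pose proof (tail_weight_pos t ltac:(lra)). pose proof (Hle t Ht). nra.
Qed.

Lemma psi_le_mul_tail_integral (t K : R) : 0 < t < a -> tail_quotient t <= K ->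
  psi t <= K * tail_integral t.
Proof.
  intros Ht HK. apply Rle_div_l; [apply tail_integral_pos, Ht | exact HK].
Qed.

Lemma slope_factor_neg_somewhere :
  (forall M eps, 0 < eps -> exists t, 0 < t < eps /\ M < psi t) ->
  exists t, 0 < t < a /\ slope_factor t < 0.
Proof.
  intros Hblowup. apply NNPP. intros Hnone.
  assert (Hge : forall t, 0 < t < a -> 0 <= slope_factor t).
  { intros t Ht. apply Rnot_lt_le. intros Hlt. apply Hnone. exists t. auto. }
  set (t0 := a / 2). set (K := tail_quotient t0).
  assert (HK : 0 < K)
    by (apply Rdiv_lt_0_compat; [apply psi_pos | apply tail_integral_pos]; unfold t0; lra).
  assert (Hpsi : forall t, 0 < t <= t0 -> psi t <= K * tail_integral t).
  { intros t Ht. apply psi_le_mul_tail_integral; [unfold t0 in *; lra|].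
    apply tail_quotient_le_of_slope_ge0; [exact Ht | unfold t0; lra |].
    intros s Hs. apply Hge. unfold t0 in *; lra. }
  assert (Htail : forall t, 0 < t <= t0 ->
            tail_integral t <= tail_integral t0 * exp (K * t0)).
  { intros t Ht.
    apply Rle_trans with (tail_integral t0 * exp (K * (t0 - t))).
    - apply (le_exp_of_derive_ge tail_integral (fun s => - psi s) K 0 t0); [| |exact Ht].
      + intros s Hs. apply tail_integral_derive. lra.
      + intros s Hs. pose proof (Hpsi s ltac:(lra)). lra.
    - apply Rmult_le_compat_l; [apply Rlt_le, tail_integral_pos; unfold t0; lra|].
      apply Rlt_le, exp_increasing. nra. }
  assert (Ht0 : 0 < t0) by (unfold t0; lra).
  destruct (Hblowup (K * (tail_integral t0 * exp (K * t0))) t0 Ht0) as [t [Ht Hbig]].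
  pose proof (Hpsi t ltac:(lra)). pose proof (Htail t ltac:(lra)). nra.
Qed.

Lemma slope_factor_pos_somewhere (m : R) : 0 < m ->
  (forall t, 0 < t < a -> m <= psi t) ->
  exists t, 0 < t < a /\ 0 < slope_factor t.
Proof.
  intros Hm Hpsi_ge. apply NNPP. intros Hnone.
  assert (Hle : forall t, 0 < t < a -> slope_factor t <= 0).
  { intros t Ht. apply Rnot_lt_le. intros Hlt. apply Hnone. exists t. auto. }
  set (t0 := a / 2). set (K := tail_quotient t0).
  assert (HK : 0 < K)
    by (apply Rdiv_lt_0_compat; [apply psi_pos | apply tail_integral_pos]; unfold t0; lra).
  assert (Hcont : continuous tail_integral a).
  { apply (@ex_derive_continuous R_AbsRing R_NormedModule).
    exists (- psi a). apply tail_integral_derive, a_pos. }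
  destruct (proj1 (filterlim_locally tail_integral (tail_integral a)) Hcont
              (mkposreal _ (Rdiv_lt_0_compat _ _ Hm HK))) as [d Hnear].
  set (t := Rmax t0 (a - d / 2)).
  assert (t0 <= t) by apply Rmax_l. assert (a - d / 2 <= t) by apply Rmax_r.
  pose proof (cond_pos d).
  assert (Hta : t < a) by (apply Rmax_lub_lt; unfold t0; lra).
  assert (Hsmall : tail_integral t < m / K).
  { specialize (Hnear t ltac:(change (Rabs (t - a) < d); rewrite Rabs_left; lra)).
    change (Rabs (tail_integral t - tail_integral a) < m / K) in Hnear.
    rewrite tail_integral_at_end, Rminus_0_r in Hnear.
    eapply Rle_lt_trans; [apply Rle_abs | exact Hnear]. }
  assert (Hpsi : psi t <= K * tail_integral t).
  { apply psi_le_mul_tail_integral; [unfold t0 in *; lra|].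
    apply tail_quotient_ge_of_slope_le0; [unfold t0 in *; lra | exact Hta |].
    intros s Hs. apply Hle. lra. }
  pose proof (Hpsi_ge t ltac:(unfold t0 in *; lra)).
  assert (K * tail_integral t < m).
  { replace m with (K * (m / K)) by (field; lra). apply Rmult_lt_compat_l; lra. }
  lra.
Qed.

Lemma slope_factor_sign_change (m : R) :
  (forall M eps, 0 < eps -> exists t, 0 < t < eps /\ M < psi t) ->
  0 < m -> (forall t, 0 < t < a -> m <= psi t) ->
  exists T, sign_change slope_factor 0 a T.
Proof.
  intros Hblowup Hm Hpsi_ge.
  destruct slope_factor_neg_somewhere as [t1 [Ht1 Hg1]]; [exact Hblowup|].
  destruct (slope_factor_pos_somewhere m Hm Hpsi_ge) as [t2 [Ht2 Hg2]].
  apply (sign_change_of_increasing _ 0 a t1 t2); try assumption.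
  - exact slope_factor_increasing.
  - intros t Ht. apply (@ex_derive_continuous R_AbsRing R_NormedModule).
    exists (dk t * tail_integral t). apply slope_factor_derive, Ht.
Qed.

End LogConvexQuotient.

Lemma eta_a_locally (a p : R) (phi : R -> R) (t : R) : 0 < t < a ->
  locally t (fun s => tail_quotient a (clamped_power a (- / (p - 1)) phi) s = eta_a a p phi s).
Proof.
  intros Ht. apply (locally_interval _ t 0 a); try (simpl; lra).
  intros s Hs1 Hs2. simpl in *.
  unfold tail_quotient, tail_integral, eta_a, clamped_power.
  rewrite Rmin_left by lra. f_equal.
  apply RInt_ext. intros x Hx.
  rewrite Rmin_left, Rmax_right in Hx by lra. rewrite Rmin_left by lra. reflexivity.
Qed.

Section EtaA.

Variables (a p M : R) (phi : R -> R).
Hypothesis a_pos : 0 < a.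
Hypothesis p_gt1 : 1 < p.
Hypothesis phi_C0 : C0_closed a phi.
Hypothesis phi0 : phi 0 = 0.
Hypothesis phi_pos : forall t, 0 < t <= a -> 0 < phi t.
Hypothesis phi_le : forall t, 0 < t <= a -> phi t <= M.
Hypothesis phi_twice : forall t, 0 < t < a -> ex_derive phi t /\ ex_derive (Derive phi) t.
Hypothesis log_concave : forall t, 0 < t < a -> Derive (fun s => Derive phi s / phi s) t < 0.

Local Notation e := (- / (p - 1)).
Local Notation psi := (clamped_power a e phi).
Local Notation k := (fun t => e * (Derive phi t / phi t)).
Local Notation dk := (fun t => e * Derive (fun s => Derive phi s / phi s) t).

Let exponent_neg : e < 0.
Proof. apply Ropp_lt_gt_0_contravar, Rinv_0_lt_compat. lra. Qed.

Let psi_pos (t : R) : 0 < t -> 0 < psi t.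
Proof. intros _. apply clamped_power_pos. Qed.

Let psi_derive (t : R) : 0 < t < a -> is_derive psi t (k t * psi t).
Proof. intros Ht. apply clamped_power_derive, phi_twice; assumption. Qed.

Let log_derivative_derive (t : R) : 0 < t < a -> is_derive k t (dk t).
Proof.
  intros Ht. apply is_derive_scal, Derive_correct, ex_derive_div;
    [apply phi_twice | apply phi_twice | apply Rgt_not_eq, phi_pos]; lra.
Qed.

Let log_derivative_increasing (t : R) : 0 < t < a -> 0 < dk t.
Proof.
  intros Ht. pose proof (log_concave t Ht). pose proof exponent_neg. nra.
Qed.

Lemma Derive_eta_a (t : R) : 0 < t < a ->
  Derive (eta_a a p phi) t = psi t / tail_integral a psi t ^ 2 * slope_factor a psi k t.
Proof.
  intros Ht. apply is_derive_unique, (is_derive_ext_loc (tail_quotient a psi)).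
  - exact (eta_a_locally a p phi t Ht).
  - exact (tail_quotient_derive a psi k a_pos psi_pos
             (clamped_power_continuous a e phi a_pos phi_C0 phi_pos) psi_derive t Ht).
Qed.

Lemma eta_a_sign_change : exists T, sign_change (Derive (eta_a a p phi)) 0 a T.
Proof.
  pose proof (clamped_power_continuous a e phi a_pos phi_C0 phi_pos) as psi_cont.
  destruct (slope_factor_sign_change a psi k dk a_pos psi_pos psi_cont psi_derive
              log_derivative_derive log_derivative_increasing (Rpower M e)
              (clamped_power_unbounded_at_0 a e phi a_pos phi_C0 phi_pos exponent_neg phi0)
              (exp_pos _)
              (clamped_power_ge a e phi phi_pos M (Rlt_le _ _ exponent_neg) phi_le))
    as [T HT].
  exists T.
  apply (sign_change_mul _ _ (fun t => psi t / tail_integral a psi t ^ 2) 0 a T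
           Derive_eta_a); [|exact HT].
  exact (tail_weight_pos a psi a_pos psi_pos psi_cont).
Qed.

End EtaA.

Theorem lemma2p4 (a p c1 c2 delta : R) (phi : R -> R)
  (ha : 0 < a) (hp : 1 < p)
  (hC1 : C1_half_open a phi) (hC0 : C0_closed a phi)
  (h0 : phi 0 = 0)
  (hpos : forall t, 0 < t <= a -> 0 < phi t)
  (hc1 : 0 < c1) (hc2 : 0 < c2) (hdelta : 0 < delta)
  (hbounds : forall t, 0 < t <= a ->
     c1 * Rpower t (p - 1 + delta) <= phi t /\ phi t <= c2 * Rpower t (p - 1 + delta))
  (htwice : forall t, 0 < t < a -> ex_derive phi t /\ ex_derive (Derive phi) t)
  (hlogconc : forall t, 0 < t < a ->
     Derive (fun s => Derive phi s / phi s) t < 0) :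
  exists! T : R, 0 < T < a /\
    (forall t, 0 < t < T -> Derive (eta_a a p phi) t < 0) /\
    (forall t, T < t < a -> 0 < Derive (eta_a a p phi) t).
Proof.
  assert (phi_le : forall t, 0 < t <= a -> phi t <= c2 * Rpower a (p - 1 + delta)).
  { intros t Ht. eapply Rle_trans; [apply (hbounds t Ht)|].
    apply Rmult_le_compat_l, Rle_Rpower_l; lra. }
  destruct (eta_a_sign_change a p _ phi ha hp hC0 h0 hpos phi_le htwice hlogconc)
    as [T HT].
  exists T. split; [exact HT|].
  intros T' HT'. exact (sign_change_unique _ _ _ _ _ HT HT').
Qed.
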